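(* Let $f_A(x)=1-\dfrac{1}{\sum_{n\ge0}n!\,x^n}$ and $f_B(x)=\dfrac{\sum_{n\ge0}2^nn!\,x^n}{\sum_{n\ge0}n!\,x^n}$. Then $f_B(x)=\sum_{n\ge0}|\mathfrak B_n^{(0)}|x^n$, and for all $n,k\ge0$, $|\mathfrak B_n^{(k)}|$ equals the coefficient of $x^nt^k$ in $\dfrac{f_B(x)}{1-t\,f_A(x)}$.
   Context: $\mathfrak B_n$ is the group of signed permutations of $\{\pm1,\dots,\pm n\}$ ($w(-i)=-w(i)$), a Coxeter group with generators $\tau_0=(-1,1)$ and $\tau_i=(i,i+1)(-i,-i-1)$ for $1\le i\le n-1$ ($\mathfrak B_0$ is trivial). For $w\in\mathfrak B_n$, $C(w)$ is the set of generators not appearing in a (any) reduced expression of $w$; equivalently, with $w(0)=0$, $C(w)=\{\tau_i: |w(j)|<w(k)\ \forall\,0\le j\le i<k\le n\}$. $\mathfrak B_n^{(k)}=\{w\in\mathfrak B_n:|C(w)|=k\}$. *)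

From mathcomp Require Import all_boot all_order all_algebra all_fingroup.
Set Implicit Arguments. Unset Strict Implicit. Unset Printing Implicit Defensive.
Import Order.TTheory GRing.Theory Num.Theory.
Local Open Scope ring_scope.

(* A signed permutation w of {±1,…,±n} is encoded by a pair (s, e) with
   s : {perm 'I_n} and e : signs; w(i+1) = (-1)^(e i) * (s i + 1),
   w(-j) = -w(j).  This is a bijection onto B_n. *)
Definition SP (n : nat) : finType :=
  ({perm 'I_n} * {ffun 'I_n -> bool})%type.

(* w(j) as an integer, for 0 <= j <= n, with the convention w(0) = 0. *)
Definition wval (n : nat) (w : SP n) (j : nat) : int :=
  if j is j'.+1 then
    match (insub j' : option 'I_n) with
    | Some i => (if w.2 i then -1 else 1) * ((w.1 i : nat).+1)%:Z
    | None => 0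
    end
  else 0.

(* C(w) = { tau_i : |w(j)| < w(k) for all 0 <= j <= i < k <= n },
   tau_i indexed by i : 'I_n (i = 0..n-1). *)
Definition Cset (n : nat) (w : SP n) : {set 'I_n} :=
  [set i : 'I_n | [forall j : 'I_n.+1, forall k : 'I_n.+1,
     ((j <= i)%N && (i < k)%N) ==> (`|wval w j| < wval w k)]].

Definition Bk (n k : nat) : {set SP n} := [set w : SP n | #|Cset w| == k].

Definition ser := nat -> int.
Definition bser := nat -> nat -> int.

Definition smul (a b : ser) : ser :=
  fun n => \sum_(i < n.+1) a i * b (n - i)%N.
Definition sone : ser := fun n => (n == 0%N)%:R.

Definition bmul (a b : bser) : bser :=
  fun n k => \sum_(i < n.+1) \sum_(j < k.+1) a i j * b (n - i)%N (k - j)%N.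

Definition Efact : ser := fun n => (n`!)%:R.
Definition Dfact : ser := fun n => (2 ^ n * n`!)%:R.

Definition one_minus_t (f : ser) : bser :=
  fun n k => if k == 0%N then (n == 0%N)%:R else if k == 1%N then - f n else 0.
Definition embed (f : ser) : bser := fun n k => if k == 0%N then f n else 0.

(* Call [t] a cut of [w] in B_n when |w(j)| < w(k) for all j <= t < k <= n,
   so that C(w) is the set of cuts t < n, while t = n is always a cut.  The
   elements of B_(m+r) with a cut at m are exactly the concatenations of some
   w' in B_m with a positive permutation of {m+1, ..., m+r}, and their cuts
   below m are those of w'.  Sorting w in B_n by the position m of its
   (k+1)-st cut, n included, gives
     sum_(m <= n) |B_m^(k)| (n - m)! = #{w in B_n : k <= |C(w)|},
   i.e. N_0 E = D and N_(k+1) E = N_k E - N_k for N_k = sum_n |B_n^(k)| x^n,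
   E = sum_n n! x^n and D = sum_n 2^n n! x^n.  Dividing by E yields N_0 = f_B
   and N_(k+1) = N_k f_A, the recursion solved by f_B / (1 - t f_A). *)

From mathcomp Require Import all_boot all_order all_algebra all_fingroup.
From mathcomp Require Import zify.
Import Order.TTheory GRing.Theory Num.Theory.
Set Implicit Arguments. Unset Strict Implicit. Unset Printing Implicit Defensive.
Local Open Scope ring_scope.

Lemma wvalS n (w : SP n) (i : 'I_n) :
  wval w i.+1 = (if w.2 i then -1 else 1) * (w.1 i).+1%:Z.
Proof. by rewrite /wval valK. Qed.

Lemma norm_wval_le n (w : SP n) j : `|wval w j| <= n%:Z.
Proof.
case: j => [|j] //=; case: insubP => [i _ _|_] //.
by rewrite normrM; case: (w.2 i); rewrite ?normrN normr1 mul1r lez_nat ltn_ord.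
Qed.

Definition is_cut n (w : SP n) (t : nat) : bool :=
  [forall j : 'I_n.+1, forall k : 'I_n.+1,
     ((j <= t)%N && (t < k)%N) ==> (`|wval w j| < wval w k)].

Lemma is_cutP n (w : SP n) t :
  reflect (forall j k, (j <= t)%N -> (t < k)%N -> (k <= n)%N -> `|wval w j| < wval w k)
          (is_cut w t).
Proof.
apply: (iffP forallP) => [h j k hj hk hkn | h j].
  have hjn : (j < n.+1)%N by lia.
  have /forallP/(_ (Ordinal (hkn : (k < n.+1)%N)))/implyP := h (Ordinal hjn).
  by apply; rewrite /= hj hk.
apply/forallP => k; apply/implyP => /andP [hj hk]; apply: h => //.
by rewrite -ltnS ltn_ord.
Qed.

Lemma mem_Cset n (w : SP n) (i : 'I_n) : (i \in Cset w) = is_cut w i.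
Proof. by rewrite inE. Qed.

Lemma is_cut_last n (w : SP n) : is_cut w n.
Proof. by apply/is_cutP => j k _ hk hkn; lia. Qed.

Lemma leq_of_inj_bounded k y (f : 'I_k -> nat) :
  injective f -> (forall a, f a < y)%N -> (k <= y)%N.
Proof.
move=> fi hf; pose g a := Ordinal (hf a).
have gi : injective g by move=> a b /(congr1 val) /= /fi.
by have := leq_card g gi; rewrite !card_ord.
Qed.

Section Concat.
Variables m r : nat.

Definition block_fun (s1 : {perm 'I_m}) (s2 : {perm 'I_r}) (p : 'I_(m + r)) :=
  match split p with inl a => lshift r (s1 a) | inr b => rshift m (s2 b) end.

Lemma block_fun_inj s1 s2 : injective (block_fun s1 s2).
Proof.
move=> p q; rewrite /block_fun.
case: splitP => a pa; case: splitP => b qb /(congr1 val) /=.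
- by move/val_inj/perm_inj => eab; apply/val_inj; rewrite /= pa qb eab.
- by have := ltn_ord (s1 a); lia.
- by have := ltn_ord (s1 b); lia.
- by move/addnI/val_inj/perm_inj => eab; apply/val_inj; rewrite /= pa qb eab.
Qed.

Definition block_perm s1 s2 : {perm 'I_(m + r)} := perm (@block_fun_inj s1 s2).

Lemma block_perm_lshift s1 s2 a : block_perm s1 s2 (lshift r a) = lshift r (s1 a).
Proof.
rewrite permE /block_fun; case: splitP => [a' /= ea | b /= eb]; last by have := ltn_ord a; lia.
by congr (lshift r (s1 _)); apply: val_inj.
Qed.

Lemma block_perm_rshift s1 s2 b : block_perm s1 s2 (rshift m b) = rshift m (s2 b).
Proof.
rewrite permE /block_fun; case: splitP => [a /= ea | b' /= eb]; first by have := ltn_ord a; lia.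
by congr (rshift m (s2 _)); apply: val_inj; apply/eqP; rewrite -(eqn_add2l m) eb.
Qed.

Lemma block_perm_inj s1 s2 t1 t2 :
  block_perm s1 s2 = block_perm t1 t2 -> s1 = t1 /\ s2 = t2.
Proof.
move=> e; split; apply/permP => i.
  by apply: (@lshift_inj m r); rewrite -(block_perm_lshift s1 s2) -(block_perm_lshift t1 t2) e.
by apply: (@rshift_inj m r); rewrite -(block_perm_rshift s1 s2) -(block_perm_rshift t1 t2) e.
Qed.

(* A signed permutation of [1..m] followed by a positive permutation of
   [m+1..m+r]. *)
Definition spcat (x : SP m * {perm 'I_r}) : SP (m + r) :=
  (block_perm x.1.1 x.2, [ffun p => if split p is inl a then x.1.2 a else false]).

Lemma spcat_inj : injective spcat.
Proof.
move=> [[s1 e1] g1] [[s2 e2] g2] [/block_perm_inj [-> ->] he]; congr (_, _, _).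
apply/ffunP => a; move/ffunP/(_ (lshift r a)): he; rewrite !ffunE.
by case: splitP => [a' /= ea | b /= eb]; [have -> : a' = a by apply: val_inj |
  have := ltn_ord a; lia].
Qed.

Lemma wval_spcat_lo x j : (j <= m)%N -> wval (spcat x) j = wval x.1 j.
Proof.
case: j => [|j] // hj.
rewrite [in LHS](_ : j = lshift r (Ordinal hj)) // [in RHS](_ : j = Ordinal hj) //.
rewrite !wvalS block_perm_lshift ffunE.
case: splitP => [a /= ea | b /= eb]; last by lia.
by have -> : a = Ordinal hj by apply: val_inj.
Qed.

Lemma wval_spcat_hi x j : (m < j <= m + r)%N -> m%:Z < wval (spcat x) j.
Proof.
case: j => [|j] // /andP [hmj hj].
have [b ->] : exists b : 'I_r, j = rshift m b.
  have hb : (j - m < r)%N by lia.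
  by exists (Ordinal hb) => /=; lia.
rewrite wvalS block_perm_rshift ffunE.
case: splitP => [a /= ea | b' _]; first by have := ltn_ord a; lia.
by rewrite mul1r ltz_nat /= ltnS leq_addr.
Qed.

Lemma is_cut_spcat_lo x t : (t < m)%N -> is_cut (spcat x) t = is_cut x.1 t.
Proof.
move=> ht; apply/is_cutP/is_cutP => h j k hj hk hkn.
  by rewrite -!wval_spcat_lo ?h //; lia.
rewrite wval_spcat_lo; last by lia.
case: (leqP k m) => hkm; first by rewrite wval_spcat_lo ?h.
by apply: le_lt_trans (norm_wval_le _ _) (wval_spcat_hi _ _); lia.
Qed.

Lemma is_cut_spcat x : is_cut (spcat x) m.
Proof.
apply/is_cutP => j k hj hk hkn; rewrite wval_spcat_lo //.
by apply: le_lt_trans (norm_wval_le _ _) (wval_spcat_hi _ _); lia.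
Qed.

Lemma block_perm_split (s : {perm 'I_(m + r)}) :
  (forall b, m <= s (rshift m b))%N -> exists s1 s2, s = block_perm s1 s2.
Proof.
move=> shi.
have hs2 b : (s (rshift m b) - m < r)%N by have := ltn_ord (s (rshift m b)); have := shi b; lia.
have s2_inj : injective (fun b => Ordinal (hs2 b)).
  move=> b1 b2 /(congr1 val) /= e.
  have : s (rshift m b1) = s (rshift m b2) by apply: ord_inj; move: e (shi b1) (shi b2); lia.
  by move/perm_inj/rshift_inj.
pose s2 := perm s2_inj.
have hs1 a : (s (lshift r a) < m)%N.
  rewrite ltnNge; apply/negP => ha.
  have hq : (s (lshift r a) - m < r)%N by have := ltn_ord (s (lshift r a)); lia.
  have := permKV s2 (Ordinal hq); rewrite permE => /(congr1 val) /= e.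
  have : s (rshift m ((s2^-1)%g (Ordinal hq))) = s (lshift r a).
    by apply: ord_inj; move: e (shi ((s2^-1)%g (Ordinal hq))) ha; lia.
  by move/perm_inj/(congr1 val) => /=; have := ltn_ord a; lia.
have s1_inj : injective (fun a => Ordinal (hs1 a)).
  by move=> a1 a2 /(congr1 val) /= /val_inj /perm_inj /lshift_inj.
exists (perm s1_inj), s2; apply/permP => p; rewrite -(splitK p).
case: (split p) => [a|b] /=.
  by rewrite block_perm_lshift permE; apply: val_inj.
by rewrite block_perm_rshift permE; apply: val_inj => /=; have := shi b; lia.
Qed.

(* [w(0) = 0] makes [w(p + 1)] positive, and it exceeds the [m] distinct values
   [|w(1)|, ..., |w(m)|]. *)
Lemma cut_tail (w : SP (m + r)) (p : 'I_(m + r)) :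
  is_cut w m -> (m <= p)%N -> ~~ w.2 p /\ (m <= w.1 p)%N.
Proof.
move=> /is_cutP hc hmp.
have w0 := hc 0%N p.+1 (leq0n _) hmp (ltn_ord p).
rewrite wvalS /= normr0 in w0.
have /negbT wp : w.2 p = false by move: w0; case: (w.2 p); rewrite ?mulN1r ?oppr_gt0.
split=> //; apply: (@leq_of_inj_bounded m _ (fun a => w.1 (lshift r a))).
  by move=> a b /val_inj /perm_inj /lshift_inj.
move=> a; have := hc (lshift r a).+1 p.+1 (ltn_ord a) hmp (ltn_ord p).
rewrite !wvalS (negbTE wp) mul1r normrM.
by case: (w.2 _); rewrite ?normrN normr1 mul1r ltz_nat.
Qed.

Lemma spcat_surj (w : SP (m + r)) : is_cut w m -> exists x, w = spcat x.
Proof.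
case: w => s e hc.
have [s1 [s2 ->]] : exists s1 s2, s = block_perm s1 s2.
  by apply: block_perm_split => b; case: (cut_tail (p := rshift m b) hc (leq_addr _ _)).
exists ((s1, [ffun a => e (lshift r a)]), s2); congr (_, _).
apply/ffunP => p; rewrite !ffunE.
case: splitP => [a /= ea | b /= eb]; first by rewrite ffunE; congr (e _); apply: val_inj.
have hmp : (m <= p)%N by rewrite eb leq_addr.
by have [/negbTE] := cut_tail hc hmp.
Qed.

End Concat.

Definition ncuts_below n (w : SP n) m := (\sum_(t < m) is_cut w t)%N.

Lemma card_Cset n (w : SP n) : #|Cset w| = ncuts_below w n.
Proof.
rewrite -sum1_card big_mkcond; apply: eq_bigr => i _.
by rewrite mem_Cset; case: is_cut.
Qed.

Lemma sum_nat_bool (T : finType) (P : pred T) : (\sum_(x : T) P x)%N = #|[set x | P x]|.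
Proof. by rewrite -sum1dep_card [RHS]big_mkcond; apply: eq_bigr => x _; case: (P x). Qed.

(* The summand is 1 only at the position of the (k+1)-st true value of [c]. *)
Lemma sum_kth_true (c : nat -> bool) k N :
  (\sum_(m < N) (c m && ((\sum_(t < m) c t)%N == k)))%N = (k < \sum_(t < N) c t)%N.
Proof.
elim: N => [|N IH]; first by rewrite !big_ord0.
rewrite !big_ord_recr /= IH.
by case: (c N) => /=; [rewrite addn1 ltnS; case: ltngtP | rewrite !addn0].
Qed.

Lemma ncuts_below_spcat m r x : ncuts_below (@spcat m r x) m = #|Cset x.1|.
Proof.
by rewrite card_Cset; apply: eq_bigr => t _; rewrite is_cut_spcat_lo.
Qed.

Lemma card_cut_at m n k : (m <= n)%N ->
  #|[set w : SP n | is_cut w m && (ncuts_below w m == k)]| = (#|Bk m k| * (n - m)`!)%N.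
Proof.
move=> /subnKC; move: (n - m)%N => r <-.
have -> : [set w : SP (m + r) | is_cut w m && (ncuts_below w m == k)] =
    @spcat m r @: setX (Bk m k) [set: {perm 'I_r}].
  apply/setP => w; rewrite inE; apply/andP/imsetP => [[/spcat_surj [x ->]] | [x]].
    by rewrite ncuts_below_spcat => hk; exists x; rewrite // !inE andbT.
  by rewrite !inE andbT => /eqP hk ->; rewrite is_cut_spcat ncuts_below_spcat hk.
by rewrite card_imset; [rewrite cardsX cardsT card_Sn | exact: spcat_inj].
Qed.

Lemma ncuts_below_last n (w : SP n) : ncuts_below w n.+1 = #|Cset w|.+1.
Proof. by rewrite /ncuts_below big_ord_recr /= is_cut_last addn1 card_Cset. Qed.

Lemma sum_card_Bk n k N : (N <= n.+1)%N ->
  (\sum_(m < N) #|Bk m k| * (n - m)`!)%N = #|[set w : SP n | k < ncuts_below w N]|%N.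
Proof.
move=> hN; rewrite -sum_nat_bool (eq_bigr (fun m : 'I_N =>
  \sum_(w : SP n) (is_cut w m && (ncuts_below w m == k)))%N); last first.
  by move=> m _; rewrite sum_nat_bool card_cut_at //; have := ltn_ord m; lia.
by rewrite exchange_big; apply: eq_bigr => w _; rewrite sum_kth_true.
Qed.

Lemma card_SP n : #|SP n| = (2 ^ n * n`!)%N.
Proof. by rewrite card_prod card_ffun card_bool card_ord card_Sn mulnC. Qed.

Lemma eq_smull a a' b n : a =1 a' -> smul a b n = smul a' b n.
Proof. by move=> h; apply: eq_bigr => i _; rewrite h. Qed.

Lemma eq_smulr a b b' n : b =1 b' -> smul a b n = smul a b' n.
Proof. by move=> h; apply: eq_bigr => i _; rewrite h. Qed.

Lemma smulBl a b c n : smul (fun i => a i - b i) c n = smul a c n - smul b c n.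
Proof. by rewrite /smul -sumrB; apply: eq_bigr => i _; rewrite mulrBl. Qed.

Lemma smulBr a b c n : smul c (fun i => a i - b i) n = smul c a n - smul c b n.
Proof. by rewrite /smul -sumrB; apply: eq_bigr => i _; rewrite mulrBr. Qed.

Lemma smul_sone a n : smul a sone n = a n.
Proof.
rewrite /smul big_ord_recr /= subnn /sone eqxx mulr1 big1 ?add0r // => i _.
by rewrite subn_eq0 leqNgt ltn_ord mulr0.
Qed.

Definition trunc_poly (N : nat) (a : ser) : {poly int} := \poly_(i < N) a i.

Lemma smul_trunc_poly N a b n :
  (n < N)%N -> smul a b n = (trunc_poly N a * trunc_poly N b)`_n.
Proof.
move=> hn; rewrite coefM; apply: eq_bigr => i _.
by rewrite !coef_poly !ifT //; have := ltn_ord i; lia.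
Qed.

Lemma coefM_eq_low (R : nzRingType) N (p q r : {poly R}) n :
  (forall i, (i < N)%N -> p`_i = q`_i) -> (n < N)%N -> (p * r)`_n = (q * r)`_n.
Proof.
move=> h hn; rewrite !coefM; apply: eq_bigr => i _.
by rewrite h //; have := ltn_ord i; lia.
Qed.

Lemma smulA a b c n : smul (smul a b) c n = smul a (smul b c) n.
Proof.
have trunc_smul x y i : (i < n.+1)%N ->
    (trunc_poly n.+1 (smul x y))`_i = (trunc_poly n.+1 x * trunc_poly n.+1 y)`_i.
  by move=> hi; rewrite coef_poly hi (smul_trunc_poly _ _ hi).
rewrite !(@smul_trunc_poly n.+1) // (coefM_eq_low _ (trunc_smul a b)) //.
by rewrite [in RHS]mulrC (coefM_eq_low _ (trunc_smul b c)) // -mulrA mulrC.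
Qed.

Lemma smul_solve e e' a b : smul e e' = sone ->
  (forall n, smul a e n = b n) -> forall n, a n = smul b e' n.
Proof.
move=> he hab n.
by rewrite -smul_sone -he -smulA; apply: eq_smull => i; rewrite -hab.
Qed.

Definition cardB k : ser := fun n => #|Bk n k|%:Z.

Lemma smul_cardB_Efact k n :
  smul (cardB k) Efact n = (\sum_(m < n.+1) #|Bk m k| * (n - m)`!)%N%:Z.
Proof. by rewrite /smul -natz natr_sum; apply: eq_bigr => i _; rewrite natrM natz. Qed.

Lemma smul_cardB0_Efact n : smul (cardB 0) Efact n = Dfact n.
Proof.
rewrite smul_cardB_Efact sum_card_Bk //.
have -> : [set w : SP n | 0 < ncuts_below w n.+1]%N = setT.
  by apply/setP => w; rewrite !inE ncuts_below_last.
by rewrite cardsT card_SP /Dfact natz.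
Qed.

Lemma smul_cardBS_Efact k n :
  smul (cardB k.+1) Efact n = smul (cardB k) Efact n - cardB k n.
Proof.
rewrite !smul_cardB_Efact [in RHS]big_ord_recr /= subnn fact0 muln1 PoszD addrK.
rewrite !sum_card_Bk //; congr Posz; apply: eq_card => w; rewrite !inE.
by rewrite ncuts_below_last card_Cset ltnS.
Qed.

Lemma bmul_one_minus_t0 G f n : bmul G (one_minus_t f) n 0 = G n 0.
Proof. by rewrite -(smul_sone (G^~ 0%N)); apply: eq_bigr => i _; rewrite big_ord1. Qed.

Lemma bmul_one_minus_tS G f n k :
  bmul G (one_minus_t f) n k.+1 = G n k.+1 - smul (G^~ k) f n.
Proof.
rewrite -(smul_sone (G^~ k.+1)) /smul -sumrB; apply: eq_bigr => i _.
rewrite 2!big_ord_recr /= subnn subSnn big1 ?add0r => [|j _].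
  by rewrite /one_minus_t /= mulrN addrC.
have hj : (1 < k.+1 - j)%N by have := ltn_ord j; lia.
by rewrite /one_minus_t (gtn_eqF (ltnW hj)) (gtn_eqF hj) mulr0.
Qed.

Lemma cardB0E Einv : smul Efact Einv = sone -> cardB 0 =1 smul Dfact Einv.
Proof. by move=> hE; apply: smul_solve hE smul_cardB0_Efact. Qed.

Lemma cardBSE Einv k : smul Efact Einv = sone ->
  cardB k.+1 =1 smul (cardB k) (fun i => sone i - Einv i).
Proof.
move=> hE n; rewrite (smul_solve hE (smul_cardBS_Efact k)).
by rewrite smulBl smulBr smulA hE smul_sone.
Qed.

Theorem mainTheorem15 (Einv : ser) (G : bser) :
  smul Efact Einv = sone ->
  let fA : ser := fun n => sone n - Einv n in
  let fB : ser := smul Dfact Einv in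
  bmul G (one_minus_t fA) = embed fB ->
  (forall n : nat, fB n = (#|Bk n 0|)%:Z) /\
  (forall n k : nat, G n k = (#|Bk n k|)%:Z).
Proof.
move=> hE fA fB hG.
have G0 n : G n 0 = fB n.
  by rewrite -(bmul_one_minus_t0 _ fA) hG.
have GS n k : G n k.+1 = smul (G^~ k) fA n.
  by apply/eqP; rewrite -subr_eq0 -bmul_one_minus_tS hG.
have GE k n : G n k = cardB k n.
  elim: k n => [|k IH] n; first by rewrite G0 (cardB0E hE).
  by rewrite GS (cardBSE _ hE); apply: eq_smull.
split=> [n | n k]; last exact: GE.
by rewrite -G0 GE.
Qed.
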